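(* Let $H$ be a complex infinite-dimensional separable Hilbert space and let $(f_n)_{n=1}^\infty$ be a frame for $H$ with analysis operator $U$. The following are equivalent: (a) $\dim\operatorname{Im}(I-U^*U)<\infty$; (b) there exist a finite-dimensional subspace $L$ of $H$ and a sequence $(g_n)_{n=1}^\infty$ in $L$ such that $(f_n+g_n)_{n=1}^\infty$ is a Parseval frame for $H$; (c) there is a closed subspace $M$ of $H$ of finite codimension such that $x=\sum_{n=1}^\infty\langle x,f_n\rangle f_n$ for all $x\in M$.
   Context: A frame: there are $0<A\le B$ with $A\|x\|^2\le\sum_n|\langle x,f_n\rangle|^2\le B\|x\|^2$ for all $x\in H$. A Parseval frame: $\sum_n|\langle x,h_n\rangle|^2=\|x\|^2$ for all $x$. The analysis operator is $U:H\to\ell^2$, $Ux=(\langle x,f_n\rangle)_n$. *)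

From Stdlib Require Import Reals.
Open Scope R_scope.

Record C := mkC { re : R; im : R }.
Definition C0 : C := mkC 0 0.
Definition C1 : C := mkC 1 0.
Definition Cadd (a b : C) : C := mkC (re a + re b) (im a + im b).
Definition Cmul (a b : C) : C :=
  mkC (re a * re b - im a * im b) (re a * im b + im a * re b).
Definition Cconj (a : C) : C := mkC (re a) (- im a).
Definition Cmod2 (a : C) : R := re a * re a + im a * im a.

Definition Cinfinite_sum (a : nat -> C) (l : C) : Prop :=
  infinite_sum (fun n => re (a n)) (re l) /\ infinite_sum (fun n => im (a n)) (im l).

Record HilbertSpace := mkHilbert {
  V :> Type;
  vzero : V;
  vadd : V -> V -> V;
  vopp : V -> V;
  vscal : C -> V -> V;
  ip : V -> V -> C   (* linear in the first argument *)
}.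

Arguments vzero {h}.
Arguments vadd {h}.
Arguments vopp {h}.
Arguments vscal {h}.
Arguments ip {h}.

Definition vsub {H : HilbertSpace} (x y : H) : H := vadd x (vopp y).
Definition vnorm {H : HilbertSpace} (x : H) : R := sqrt (re (ip x x)).

Definition Cauchy_seq {H : HilbertSpace} (u : nat -> H) : Prop :=
  forall eps, eps > 0 -> exists N, forall n m, (n >= N)%nat -> (m >= N)%nat ->
    vnorm (vsub (u n) (u m)) < eps.

Definition seq_conv {H : HilbertSpace} (u : nat -> H) (l : H) : Prop :=
  forall eps, eps > 0 -> exists N, forall n, (n >= N)%nat -> vnorm (vsub (u n) l) < eps.

Definition is_hilbert (H : HilbertSpace) : Prop :=
  (forall x y z : H, vadd x (vadd y z) = vadd (vadd x y) z) /\
  (forall x y : H, vadd x y = vadd y x) /\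
  (forall x : H, vadd x vzero = x) /\
  (forall x : H, vadd x (vopp x) = vzero) /\
  (forall (a b : C) (x : H), vscal a (vscal b x) = vscal (Cmul a b) x) /\
  (forall x : H, vscal C1 x = x) /\
  (forall (a : C) (x y : H), vscal a (vadd x y) = vadd (vscal a x) (vscal a y)) /\
  (forall (a b : C) (x : H), vscal (Cadd a b) x = vadd (vscal a x) (vscal b x)) /\
  (forall x y z : H, ip (vadd x y) z = Cadd (ip x z) (ip y z)) /\
  (forall (a : C) (x y : H), ip (vscal a x) y = Cmul a (ip x y)) /\
  (forall x y : H, ip y x = Cconj (ip x y)) /\
  (forall x : H, 0 <= re (ip x x)) /\
  (forall x : H, ip x x = C0 -> x = vzero) /\
  (forall u : nat -> H, Cauchy_seq u -> exists l, seq_conv u l).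

Definition separable (H : HilbertSpace) : Prop :=
  exists d : nat -> H, forall (x : H) eps, eps > 0 -> exists n, vnorm (vsub x (d n)) < eps.

Fixpoint vsum {H : HilbertSpace} (k : nat) (F : nat -> H) : H :=
  match k with
  | O => vzero
  | S k' => vadd (vsum k' F) (F k')
  end.

Definition in_span {H : HilbertSpace} (k : nat) (e : nat -> H) (x : H) : Prop :=
  exists c : nat -> C, x = vsum k (fun i => vscal (c i) (e i)).

Definition infinite_dimensional (H : HilbertSpace) : Prop :=
  ~ exists (k : nat) (e : nat -> H), forall x : H, in_span k e x.

Definition is_subspace {H : HilbertSpace} (M : H -> Prop) : Prop :=
  M vzero /\ (forall x y, M x -> M y -> M (vadd x y)) /\
  (forall a x, M x -> M (vscal a x)).

Definition is_closed_set {H : HilbertSpace} (M : H -> Prop) : Prop :=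
  forall (u : nat -> H) l, (forall n, M (u n)) -> seq_conv u l -> M l.

Definition finite_dim_subspace {H : HilbertSpace} (L : H -> Prop) : Prop :=
  is_subspace L /\ exists (k : nat) (e : nat -> H), forall x, L x <-> in_span k e x.

Definition finite_codim {H : HilbertSpace} (M : H -> Prop) : Prop :=
  exists (k : nat) (e : nat -> H), forall x : H,
    exists m v, M m /\ in_span k e v /\ x = vadd m v.

Definition frame {H : HilbertSpace} (f : nat -> H) : Prop :=
  exists A B, 0 < A /\ A <= B /\
    forall x : H, exists s, infinite_sum (fun n => Cmod2 (ip x (f n))) s /\
      A * (vnorm x)^2 <= s /\ s <= B * (vnorm x)^2.

Definition parseval_frame {H : HilbertSpace} (f : nat -> H) : Prop :=
  forall x : H, infinite_sum (fun n => Cmod2 (ip x (f n))) ((vnorm x)^2).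

(* The analysis operator U x = (<x, f_n>)_n into l^2; its adjoint is
   determined by <U^* c, z> = <c, U z>_{l^2}.  Hence y = U^*U x means
   <y, z> = <U x, U z>_{l^2} = sum_n <x,f_n> conj(<z,f_n>) for all z. *)
Definition analysis_op {H : HilbertSpace} (f : nat -> H) (x : H) : nat -> C :=
  fun n => ip x (f n).

Definition l2_ip (a b : nat -> C) (l : C) : Prop :=
  Cinfinite_sum (fun n => Cmul (a n) (Cconj (b n))) l.

Definition UstarU {H : HilbertSpace} (f : nat -> H) (x y : H) : Prop :=
  forall z : H, l2_ip (analysis_op f x) (analysis_op f z) (ip y z).

Definition im_I_minus_UstarU {H : HilbertSpace} (f : nat -> H) (w : H) : Prop :=
  exists x y, UstarU f x y /\ w = vsub x y.

Definition finite_dim_set {H : HilbertSpace} (S : H -> Prop) : Prop :=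
  exists (k : nat) (e : nat -> H), forall x, S x -> in_span k e x.

Definition reconstructs {H : HilbertSpace} (f : nat -> H) (x : H) : Prop :=
  seq_conv (fun N => vsum (S N) (fun n => vscal (ip x (f n)) (f n))) x.

(* The frame operator is
   then built: by the Bessel bound the partial sums sum_{n<N} <x,f_n> f_n
   are Cauchy; their limit S x satisfies <S x, z> = sum_n <x,f_n> conj <z,f_n>,
   and S is linear, self-adjoint and positive definite, so <S x, y> is a
   second inner product on H.  Condition (c) at x says exactly S x = x.
   Let u be an orthonormal family whose span contains Im(I - S).
   - (a) -> (c): S fixes u^perp, a closed subspace of finite codimension.
   - (b) -> (a) and (c) -> (a): if (I - S) maps a subspace M into span u and
     H = M + span e, then Im(I - S) lies in span(u, e - S e).  Under (b),
     <S x, z> = <x, z> on u^perp, so (I - S) maps u^perp into span u.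
   - (a) -> (b): Gram-Schmidt for <S.,.> yields an S-orthonormal basis b of
     span u; with P the projection onto span u, T x = (x - P x) +
     sum_i <x,u_i> b_i satisfies <S T x, T x> = |x|^2, and the perturbation
     g_n = sum_i (<f_n,b_i> - <f_n,u_i>) u_i gives <x, f_n + g_n> = <T x, f_n>. *)

From Pilot Require Import Defs.
From Stdlib Require Import Reals Lra Lia Psatz Ring Field.
From Stdlib Require Import Classical IndefiniteDescription.
(* Import Defs again so that [C] denotes the complex numbers of Defs rather
   than the binomial coefficients of Reals. *)
Import Defs.
Open Scope R_scope.

(** * Complex arithmetic *)

Definition Copp (a : C) : C := mkC (- re a) (- im a).
Definition Csub (a b : C) : C := Cadd a (Copp b).
Definition RC (r : R) : C := mkC r 0.
Definition Ci : C := mkC 0 1.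

Lemma C_ext (a b : C) : re a = re b -> im a = im b -> a = b.
Proof. destruct a, b; simpl; intros; subst; reflexivity. Qed.

Lemma C_ring : ring_theory C0 C1 Cadd Cmul Csub Copp (@eq C).
Proof.
  constructor; intros; apply C_ext; unfold Cadd, Cmul, Csub, Copp, C0, C1; simpl; ring.
Qed.
Add Ring Cring : C_ring.

Ltac Creal :=
  apply C_ext; unfold Cadd, Cmul, Csub, Copp, C0, C1, Cconj, RC, Ci, Cmod2; simpl.

Lemma Cconj_add a b : Cconj (Cadd a b) = Cadd (Cconj a) (Cconj b).
Proof. Creal; ring. Qed.
Lemma Cconj_mul a b : Cconj (Cmul a b) = Cmul (Cconj a) (Cconj b).
Proof. Creal; ring. Qed.
Lemma Cconj_sub a b : Cconj (Csub a b) = Csub (Cconj a) (Cconj b).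
Proof. Creal; ring. Qed.
Lemma Cconj_opp a : Cconj (Copp a) = Copp (Cconj a).
Proof. Creal; ring. Qed.
Lemma Cconj_conj a : Cconj (Cconj a) = a.
Proof. Creal; ring. Qed.
Lemma Cconj_0 : Cconj C0 = C0.
Proof. Creal; ring. Qed.

Lemma Cmod2_ge0 a : 0 <= Cmod2 a.
Proof. unfold Cmod2; nra. Qed.
Lemma re_mul_conj a : re (Cmul a (Cconj a)) = Cmod2 a.
Proof. unfold Cmul, Cconj, Cmod2; simpl; ring. Qed.

(* 2 t Re(a conj b) <= t^2 |a|^2 + |b|^2, the AM-GM step of the Bessel estimate. *)
Lemma re_conj_bound t a b :
  2 * t * re (Cmul a (Cconj b)) <= t * t * Cmod2 a + Cmod2 b.
Proof.
  unfold Cmod2, Cmul, Cconj; simpl.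
  generalize (pow2_ge_0 (t * re a - re b)) (pow2_ge_0 (t * im a - im b)); nra.
Qed.

Fixpoint Csum (k : nat) (F : nat -> C) : C :=
  match k with O => C0 | S k' => Cadd (Csum k' F) (F k') end.
Fixpoint rsum (k : nat) (g : nat -> R) : R :=
  match k with O => 0 | S k' => rsum k' g + g k' end.

Lemma Csum_ext k F G : (forall i, (i < k)%nat -> F i = G i) -> Csum k F = Csum k G.
Proof. induction k; simpl; intros E; auto. rewrite IHk, E; auto. Qed.
Lemma Csum_ext' k F G : (forall i, F i = G i) -> Csum k F = Csum k G.
Proof. intros; apply Csum_ext; auto. Qed.
Lemma Csum_add k F G : Csum k (fun i => Cadd (F i) (G i)) = Cadd (Csum k F) (Csum k G).
Proof. induction k; simpl. ring. rewrite IHk; ring. Qed.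
Lemma Csum_sub k F G : Csum k (fun i => Csub (F i) (G i)) = Csub (Csum k F) (Csum k G).
Proof. induction k; simpl. ring. rewrite IHk; ring. Qed.
Lemma Csum_scal k c F : Csum k (fun i => Cmul c (F i)) = Cmul c (Csum k F).
Proof. induction k; simpl. ring. rewrite IHk; ring. Qed.
Lemma Csum_conj k F : Cconj (Csum k F) = Csum k (fun i => Cconj (F i)).
Proof. induction k; simpl. apply Cconj_0. rewrite Cconj_add, IHk; auto. Qed.
Lemma Csum_zero m F : (forall i, (i < m)%nat -> F i = C0) -> Csum m F = C0.
Proof. induction m; simpl; intros E; auto. rewrite IHm, E by auto; ring. Qed.
Lemma Csum_delta m j F : (j < m)%nat -> (forall i, (i < m)%nat -> i <> j -> F i = C0) ->
  Csum m F = F j.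
Proof.
  induction m; intros hj hF; [lia|]. simpl.
  destruct (Nat.eq_dec j m) as [->|ne].
  - rewrite Csum_zero by (intros; apply hF; lia). ring.
  - rewrite IHm, (hF m) by (auto; lia). ring.
Qed.
Lemma Csum_shift N K F : Csum (N + K) F = Cadd (Csum N F) (Csum K (fun j => F (N + j)%nat)).
Proof.
  induction K; simpl. rewrite Nat.add_0_r; ring.
  rewrite Nat.add_succ_r; simpl. rewrite IHK; ring.
Qed.

Lemma rsum_sf n g : rsum (S n) g = sum_f_R0 g n.
Proof. induction n; simpl in *. lra. rewrite <- IHn; auto. Qed.
Lemma rsum_le k g h : (forall i, g i <= h i) -> rsum k g <= rsum k h.
Proof. induction k; simpl; intros E; [lra|]. specialize (IHk E). specialize (E k). lra. Qed.
Lemma rsum_ge0 k g : (forall i, 0 <= g i) -> 0 <= rsum k g.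
Proof. induction k; simpl; intros E; [lra|]. specialize (IHk E). specialize (E k). lra. Qed.
Lemma rsum_add k g h : rsum k (fun i => g i + h i) = rsum k g + rsum k h.
Proof. induction k; simpl; [lra|]. rewrite IHk; ring. Qed.
Lemma rsum_scal k c g : rsum k (fun i => c * g i) = c * rsum k g.
Proof. induction k; simpl; [lra|]. rewrite IHk; ring. Qed.
Lemma rsum_shift N K g : rsum (N + K) g = rsum N g + rsum K (fun j => g (N + j)%nat).
Proof.
  induction K; simpl. rewrite Nat.add_0_r; ring.
  rewrite Nat.add_succ_r; simpl. rewrite IHK; ring.
Qed.
Lemma re_Csum k F : re (Csum k F) = rsum k (fun i => re (F i)).
Proof. induction k; simpl; auto. rewrite IHk; auto. Qed.

Lemma rsum_le_lim g s : (forall i, 0 <= g i) -> infinite_sum g s -> forall n, rsum n g <= s.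
Proof.
  intros hg hs.
  assert (G : forall n, sum_f_R0 g n <= s).
  { apply growing_ineq; auto. intro n; simpl. specialize (hg (S n)); lra. }
  intros [|n]; [simpl; specialize (G O); specialize (hg O); simpl in G; lra|].
  rewrite rsum_sf; auto.
Qed.

Lemma cv_const r : Un_cv (fun _ => r) r.
Proof. intros e he; exists O; intros; unfold Rdist; rewrite Rminus_diag, Rabs_R0; lra. Qed.
Lemma cv_ext (u v : nat -> R) l : (forall n, u n = v n) -> Un_cv u l -> Un_cv v l.
Proof. intros E h eps he. destruct (h eps he) as [N HN]; exists N; intros; rewrite <- E; auto. Qed.

Lemma inf_ext (s t : nat -> R) l : (forall n, s n = t n) -> infinite_sum s l -> infinite_sum t l.
Proof.
  intros E h eps he. destruct (h eps he) as [N HN]. exists N; intros n hn.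
  rewrite (sum_eq t s) by (intros; auto). auto.
Qed.
Lemma inf_unique s l1 l2 : infinite_sum s l1 -> infinite_sum s l2 -> l1 = l2.
Proof. intros. eapply UL_sequence; eauto. Qed.

(* Series version of the polarization combination (s1 - s2) / 4. *)
Lemma inf_polar s1 s2 l1 l2 : infinite_sum s1 l1 -> infinite_sum s2 l2 ->
  infinite_sum (fun n => (s1 n - s2 n) / 4) ((l1 - l2) / 4).
Proof.
  intros h1 h2.
  assert (P : forall n, sum_f_R0 (fun k => (s1 k - s2 k) / 4) n
                        = (sum_f_R0 s1 n - sum_f_R0 s2 n) * / 4).
  { induction n; simpl; [|rewrite IHn]; unfold Rdiv; ring. }
  eapply cv_ext; [intro n; symmetry; apply P|].
  apply (CV_mult _ _ _ _ (CV_minus _ _ _ _ h1 h2) (cv_const (/ 4))).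
Qed.

Lemma sum_f_re n F : sum_f_R0 (fun i => re (F i)) n = re (Csum (S n) F).
Proof. induction n; simpl. unfold C0; simpl; ring. rewrite IHn; simpl; auto. Qed.
Lemma sum_f_im n F : sum_f_R0 (fun i => im (F i)) n = im (Csum (S n) F).
Proof. induction n; simpl. unfold C0; simpl; ring. rewrite IHn; simpl; auto. Qed.

Lemma Cinf_iff a l : Cinfinite_sum a l <->
  Un_cv (fun n => re (Csum (S n) a)) (re l) /\ Un_cv (fun n => im (Csum (S n) a)) (im l).
Proof.
  unfold Cinfinite_sum, infinite_sum.
  split; intros [h1 h2]; split; intros eps he;
   [destruct (h1 eps he) as [N HN] | destruct (h2 eps he) as [N HN]
   |destruct (h1 eps he) as [N HN] | destruct (h2 eps he) as [N HN]];
   exists N; intros n hn; specialize (HN n hn);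
   rewrite ?sum_f_re, ?sum_f_im in *; auto.
Qed.

Lemma Cinf_ext a b l : (forall n, a n = b n) -> Cinfinite_sum a l -> Cinfinite_sum b l.
Proof.
  rewrite !Cinf_iff; intros E [h1 h2].
  split; eapply cv_ext; try eassumption; intro n; rewrite (Csum_ext' _ b a); auto.
Qed.

Lemma Cinf_add a b l1 l2 : Cinfinite_sum a l1 -> Cinfinite_sum b l2 ->
  Cinfinite_sum (fun n => Cadd (a n) (b n)) (Cadd l1 l2).
Proof.
  rewrite !Cinf_iff. intros [h1 h2] [k1 k2].
  split; [eapply cv_ext; [| apply (CV_plus _ _ _ _ h1 k1)]
         |eapply cv_ext; [| apply (CV_plus _ _ _ _ h2 k2)]];
  intro n; rewrite Csum_add; reflexivity.
Qed.

Lemma Cinf_scal c a l : Cinfinite_sum a l ->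
  Cinfinite_sum (fun n => Cmul c (a n)) (Cmul c l).
Proof.
  rewrite !Cinf_iff. intros [h1 h2]. split.
  - eapply cv_ext; [| apply (CV_minus _ _ _ _ (CV_mult _ _ _ _ (cv_const (re c)) h1)
                                           (CV_mult _ _ _ _ (cv_const (im c)) h2))].
    intro n; rewrite Csum_scal; reflexivity.
  - eapply cv_ext; [| apply (CV_plus _ _ _ _ (CV_mult _ _ _ _ (cv_const (re c)) h2)
                                           (CV_mult _ _ _ _ (cv_const (im c)) h1))].
    intro n; rewrite Csum_scal; reflexivity.
Qed.

Lemma Cinf_conj a l : Cinfinite_sum a l ->
  Cinfinite_sum (fun n => Cconj (a n)) (Cconj l).
Proof.
  rewrite !Cinf_iff. intros [h1 h2].
  split; [eapply cv_ext; [| apply h1] | eapply cv_ext; [| apply (CV_opp _ _ h2)]];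
  intro n; rewrite <- Csum_conj; reflexivity.
Qed.

Lemma Cinf_unique a l1 l2 : Cinfinite_sum a l1 -> Cinfinite_sum a l2 -> l1 = l2.
Proof. intros [h1 h2] [k1 k2]. apply C_ext; eapply inf_unique; eauto. Qed.

Lemma Cinf_mod2 a l : Cinfinite_sum (fun n => Cmul (a n) (Cconj (a n))) l ->
  infinite_sum (fun n => Cmod2 (a n)) (re l).
Proof. intros [h1 _]. eapply inf_ext; [| apply h1]. intro n; apply re_mul_conj. Qed.

(** * Elementary Hilbert space geometry *)

Section Hilbert.
Variable H : HilbertSpace.
Hypothesis HH : is_hilbert H.

Lemma vaddA (x y z : H) : vadd x (vadd y z) = vadd (vadd x y) z.
Proof. destruct HH as (h&_); apply h. Qed.
Lemma vaddC (x y : H) : vadd x y = vadd y x.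
Proof. destruct HH as (_&h&_); apply h. Qed.
Lemma vadd0 (x : H) : vadd x vzero = x.
Proof. destruct HH as (_&_&h&_); apply h. Qed.
Lemma vaddN (x : H) : vadd x (vopp x) = vzero.
Proof. destruct HH as (_&_&_&h&_); apply h. Qed.
Lemma ipDl (x y z : H) : ip (vadd x y) z = Cadd (ip x z) (ip y z).
Proof. destruct HH as (_&_&_&_&_&_&_&_&h&_); apply h. Qed.
Lemma ipZl a (x y : H) : ip (vscal a x) y = Cmul a (ip x y).
Proof. destruct HH as (_&_&_&_&_&_&_&_&_&h&_); apply h. Qed.
Lemma ip_sym (x y : H) : ip y x = Cconj (ip x y).
Proof. destruct HH as (_&_&_&_&_&_&_&_&_&_&h&_); apply h. Qed.
Lemma ip_pos (x : H) : 0 <= re (ip x x).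
Proof. destruct HH as (_&_&_&_&_&_&_&_&_&_&_&h&_); apply h. Qed.
Lemma ip_def (x : H) : ip x x = C0 -> x = vzero.
Proof. destruct HH as (_&_&_&_&_&_&_&_&_&_&_&_&h&_); apply h. Qed.
Lemma complete (u : nat -> H) : Cauchy_seq u -> exists l, seq_conv u l.
Proof. destruct HH as (_&_&_&_&_&_&_&_&_&_&_&_&_&h); apply h. Qed.

Lemma additive_zero (q : H -> C) : (forall x y, q (vadd x y) = Cadd (q x) (q y)) ->
  q vzero = C0.
Proof.
  intros hq. assert (E := hq vzero vzero). rewrite vadd0 in E.
  apply C_ext; [assert (E' := f_equal re E) | assert (E' := f_equal im E)]; simpl in *; lra.
Qed.

Lemma ip0l (z : H) : ip vzero z = C0.
Proof. apply (additive_zero (fun x => ip x z)); intros; apply ipDl. Qed.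
Lemma ipNl (x z : H) : ip (vopp x) z = Copp (ip x z).
Proof.
  assert (E := ipDl x (vopp x) z). rewrite vaddN, ip0l in E.
  apply C_ext; [assert (E' := f_equal re E) | assert (E' := f_equal im E)]; simpl in *; lra.
Qed.
Lemma ipBl (x y z : H) : ip (vsub x y) z = Csub (ip x z) (ip y z).
Proof. unfold vsub; rewrite ipDl, ipNl; reflexivity. Qed.
Lemma ipDr (x y z : H) : ip z (vadd x y) = Cadd (ip z x) (ip z y).
Proof. rewrite ip_sym, ipDl, Cconj_add, <- !ip_sym; auto. Qed.
Lemma ipZr a (x y : H) : ip y (vscal a x) = Cmul (Cconj a) (ip y x).
Proof. rewrite ip_sym, ipZl, Cconj_mul, <- ip_sym; auto. Qed.
Lemma ipNr (x z : H) : ip z (vopp x) = Copp (ip z x).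
Proof. rewrite ip_sym, ipNl, Cconj_opp, <- ip_sym; auto. Qed.
Lemma ipBr (x y z : H) : ip z (vsub x y) = Csub (ip z x) (ip z y).
Proof. unfold vsub; rewrite ipDr, ipNr; reflexivity. Qed.
Lemma ip0r (z : H) : ip z vzero = C0.
Proof. rewrite ip_sym, ip0l; apply Cconj_0. Qed.

Lemma ip_vsum_l k (F : nat -> H) z : ip (vsum k F) z = Csum k (fun i => ip (F i) z).
Proof. induction k; simpl. apply ip0l. rewrite ipDl, IHk; auto. Qed.
Lemma ip_vsum_r k (F : nat -> H) z : ip z (vsum k F) = Csum k (fun i => ip z (F i)).
Proof. induction k; simpl. apply ip0r. rewrite ipDr, IHk; auto. Qed.
Lemma ip_vsum_scal_l k c (u : nat -> H) z :
  ip (vsum k (fun i => vscal (c i) (u i))) z = Csum k (fun i => Cmul (c i) (ip (u i) z)).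
Proof. rewrite ip_vsum_l. apply Csum_ext'. intro; apply ipZl. Qed.
Lemma ip_vsum_scal_r k c (u : nat -> H) z :
  ip z (vsum k (fun i => vscal (c i) (u i))) = Csum k (fun i => Cmul (Cconj (c i)) (ip z (u i))).
Proof. rewrite ip_vsum_r. apply Csum_ext'. intro; apply ipZr. Qed.

Lemma vsub_eq0 (a b : H) : vsub a b = vzero -> a = b.
Proof.
  unfold vsub; intros E.
  rewrite <- (vadd0 a), <- (vaddN b), (vaddC b), vaddA, E, vaddC, vadd0; auto.
Qed.

(* Vectors are determined by their inner products: all vector identities
   below are proved by testing against an arbitrary z. *)
Lemma v_ext (a b : H) : (forall z, ip a z = ip b z) -> a = b.
Proof. intros E. apply vsub_eq0, ip_def. rewrite ipBl, E. ring. Qed.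

Ltac ipexp := repeat (rewrite ?ip_vsum_scal_l, ?ip_vsum_scal_r, ?ipDl, ?ipZl, ?ipBl, ?ipNl,
   ?ip0l, ?ipDr, ?ipZr, ?ipBr, ?ipNr, ?ip0r); rewrite ?ip_vsum_l, ?ip_vsum_r.
Ltac vext := apply v_ext; intro; ipexp; ring.

Lemma vsum_shift N K (F : nat -> H) :
  vsub (vsum (N + K) F) (vsum N F) = vsum K (fun j => F (N + j)%nat).
Proof. apply v_ext; intro z. ipexp. rewrite Csum_shift. ring. Qed.

Definition nsq (x : H) : R := re (ip x x).

Lemma im_ipxx (x : H) : im (ip x x) = 0.
Proof. assert (E := f_equal im (ip_sym x x)). simpl in E. lra. Qed.
Lemma ipxx_RC x : ip x x = RC (nsq x).
Proof. apply C_ext; simpl; auto. apply im_ipxx. Qed.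
Lemma nsq_ge0 x : 0 <= nsq x.
Proof. apply ip_pos. Qed.
Lemma nsq_0 x : nsq x = 0 -> x = vzero.
Proof. intros E; apply ip_def; rewrite ipxx_RC, E; reflexivity. Qed.
Lemma nsq_pos x : x <> vzero -> 0 < nsq x.
Proof. intros hx. destruct (nsq_ge0 x) as [h|h]; auto. exfalso; apply hx, nsq_0; auto. Qed.
Lemma nsq_sym (a b : H) : nsq (vsub a b) = nsq (vsub b a).
Proof. unfold nsq. f_equal. ipexp. ring. Qed.
Lemma vnorm_sq x : (vnorm x)^2 = nsq x.
Proof. unfold vnorm; apply pow2_sqrt, ip_pos. Qed.
Lemma vnorm_lt x e : 0 < e -> (vnorm x < e <-> nsq x < e * e).
Proof.
  intros He. unfold vnorm. fold (nsq x). assert (h := nsq_ge0 x).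
  rewrite <- (sqrt_square e) at 1 by lra. split; intro E.
  - apply sqrt_lt_0_alt; auto.
  - apply sqrt_lt_1_alt; lra.
Qed.

Lemma cauchy_schwarz (x y : H) : Cmod2 (ip x y) <= nsq x * nsq y.
Proof.
  destruct (Req_dec (nsq y) 0) as [E|E].
  - apply nsq_0 in E; subst. rewrite ip0r. unfold nsq. rewrite ip0r. unfold Cmod2; simpl. lra.
  - (* expand |x - (c / |y|^2) y|^2 >= 0 with c = <x,y> *)
    assert (hy : 0 < nsq y) by (generalize (nsq_ge0 y); lra).
    set (c := ip x y). set (t := / nsq y).
    assert (hv := nsq_ge0 (vsub x (vscal (Cmul (RC t) c) y))).
    assert (Ev : nsq (vsub x (vscal (Cmul (RC t) c) y)) = nsq x - t * Cmod2 c).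
    { unfold nsq. ipexp. rewrite (ip_sym x y), (ipxx_RC x), (ipxx_RC y). fold c.
      unfold t, Csub, Cadd, Cmul, Copp, Cconj, RC, Cmod2; simpl. field. lra. }
    rewrite Ev in hv. unfold t in hv.
    apply (Rmult_le_compat_r (nsq y)) in hv; [|lra].
    field_simplify in hv; lra.
Qed.

Lemma ip_cont (u : nat -> H) l z : seq_conv u l ->
  Un_cv (fun n => re (ip (u n) z)) (re (ip l z)) /\ Un_cv (fun n => im (ip (u n) z)) (im (ip l z)).
Proof.
  intros hu.
  assert (main : forall eps, eps > 0 -> exists N, forall n, (n >= N)%nat ->
            Cmod2 (ip (vsub (u n) l) z) < eps * eps).
  { intros eps he. set (K := nsq z + 1).
    assert (hK : 0 < K) by (unfold K; generalize (nsq_ge0 z); lra).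
    assert (sK := sqrt_lt_R0 _ hK). assert (hs : sqrt K * sqrt K = K) by (apply sqrt_sqrt; lra).
    destruct (hu (eps / sqrt K)) as [N HN]. { apply Rdiv_lt_0_compat; lra. }
    exists N; intros n hn. specialize (HN n hn).
    apply vnorm_lt in HN; [| apply Rdiv_lt_0_compat; lra].
    replace (eps / sqrt K * (eps / sqrt K)) with (eps * eps / K) in HN
      by (set (q := sqrt K) in *; rewrite <- hs; field; lra).
    eapply Rle_lt_trans; [apply cauchy_schwarz|].
    generalize (nsq_ge0 z) (nsq_ge0 (vsub (u n) l)); intros.
    apply Rle_lt_trans with (eps * eps / K * nsq z).
    - apply Rmult_le_compat_r; lra.
    - unfold K in *. apply Rmult_lt_reg_r with (nsq z + 1); [lra|].
      field_simplify; [|lra]. nra. }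
  split; intros eps he; destruct (main eps he) as [N HN]; exists N; intros n hn;
  specialize (HN n hn); unfold Rdist; rewrite ipBl in HN; unfold Cmod2 in HN; simpl in HN;
  rewrite <- (Rabs_pos_eq eps) by lra; apply Rsqr_lt_abs_0; unfold Rsqr, Rminus;
  [ generalize (Rle_0_sqr (im (ip (u n) z) + - im (ip l z)))
  | generalize (Rle_0_sqr (re (ip (u n) z) + - re (ip l z)))]; unfold Rsqr; lra.
Qed.

Lemma seq_conv_shift (u : nat -> H) l : seq_conv (fun n => u (S n)) l <-> seq_conv u l.
Proof.
  split; intros h eps he; destruct (h eps he) as [N HN].
  - exists (S N). intros [|n] hn; [lia|]. apply HN; lia.
  - exists N. intros n hn. apply HN; lia.
Qed.

Lemma vsum_sub k c (a b : nat -> H) :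
  vsum k (fun i => vscal (c i) (vsub (a i) (b i)))
  = vsub (vsum k (fun i => vscal (c i) (a i))) (vsum k (fun i => vscal (c i) (b i))).
Proof. induction k; simpl; [vext|]. rewrite IHk. vext. Qed.

Lemma vsum_ext k (F G : nat -> H) : (forall i, (i < k)%nat -> F i = G i) -> vsum k F = vsum k G.
Proof. induction k; simpl; intros E; auto. rewrite IHk, E; auto. Qed.

Lemma in_span_ext m u u' (x : H) : (forall i, (i < m)%nat -> u i = u' i) ->
  in_span m u x -> in_span m u' x.
Proof. intros E [c ->]. exists c. apply vsum_ext. intros; rewrite E; auto. Qed.
Lemma in_span_S m u (x : H) : in_span m u x -> in_span (S m) u x.
Proof.
  intros [c ->]. exists (fun i => if Nat.ltb i m then c i else C0). simpl.
  apply v_ext; intro z. ipexp. rewrite Nat.ltb_irrefl.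
  rewrite (Csum_ext m (fun i => Cmul (if Nat.ltb i m then c i else C0) (ip (u i) z))
                     (fun i => Cmul (c i) (ip (u i) z))); [ring|].
  intros i hi. rewrite (proj2 (Nat.ltb_lt i m) hi). auto.
Qed.
Lemma in_span_add m u (x y : H) : in_span m u x -> in_span m u y -> in_span m u (vadd x y).
Proof.
  intros [c ->] [d ->]. exists (fun i => Cadd (c i) (d i)). apply v_ext; intro z. ipexp.
  rewrite <- Csum_add. apply Csum_ext'. intro; ring.
Qed.
Lemma in_span_scal m u a (x : H) : in_span m u x -> in_span m u (vscal a x).
Proof.
  intros [c ->]. exists (fun i => Cmul a (c i)). apply v_ext; intro z. ipexp.
  rewrite <- Csum_scal. apply Csum_ext'. intro; ring.
Qed.
Lemma in_span_sub m u (x y : H) : in_span m u x -> in_span m u y -> in_span m u (vsub x y).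
Proof.
  intros hx hy. replace (vsub x y) with (vadd x (vscal (Copp C1) y)) by vext.
  apply in_span_add; auto. apply in_span_scal; auto.
Qed.
Lemma in_span_zero m u : in_span m u (vzero : H).
Proof. exists (fun _ => C0). apply v_ext; intro z. ipexp. rewrite Csum_zero; auto. intros; ring. Qed.
Lemma in_span_elem m u i : (i < m)%nat -> in_span m u (u i : H).
Proof.
  intro hi. exists (fun j => if Nat.eqb j i then C1 else C0). apply v_ext; intro z. ipexp.
  rewrite (Csum_delta m i) by (auto; intros j hj ne; rewrite (proj2 (Nat.eqb_neq j i) ne); ring).
  rewrite Nat.eqb_refl. ring.
Qed.
Lemma in_span_vsum m u k (d : nat -> C) (e : nat -> H) :
  (forall j, (j < k)%nat -> in_span m u (e j)) -> in_span m u (vsum k (fun j => vscal (d j) (e j))).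
Proof.
  induction k; simpl; intros h. apply in_span_zero.
  apply in_span_add. apply IHk; auto. apply in_span_scal; auto.
Qed.
Lemma span_trans k e m u (x : H) :
  (forall i, (i < k)%nat -> in_span m u (e i)) -> in_span k e x -> in_span m u x.
Proof. intros h [c ->]. apply in_span_vsum; auto. Qed.

Definition concat m1 (e1 e2 : nat -> H) : nat -> H :=
  fun i => if Nat.ltb i m1 then e1 i else e2 (i - m1)%nat.

Lemma in_span_concat m1 m2 e1 e2 (a b : H) : in_span m1 e1 a -> in_span m2 e2 b ->
  in_span (m1 + m2) (concat m1 e1 e2) (vadd a b).
Proof.
  intros [c ->] [d ->].
  exists (fun i => if Nat.ltb i m1 then c i else d (i - m1)%nat).
  apply v_ext; intro z. ipexp. rewrite Csum_shift. f_equal.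
  - apply Csum_ext. intros i hi. unfold concat. rewrite (proj2 (Nat.ltb_lt i m1) hi). auto.
  - apply Csum_ext. intros i hi. unfold concat.
    rewrite (proj2 (Nat.ltb_ge (m1 + i) m1)) by lia. replace (m1 + i - m1)%nat with i by lia. auto.
Qed.

Definition ext (u : nat -> H) m (w : H) : nat -> H := fun i => if Nat.eqb i m then w else u i.

Lemma ext_lt u m w i : (i < m)%nat -> ext u m w i = u i.
Proof. intro; unfold ext. rewrite (proj2 (Nat.eqb_neq i m)); auto; lia. Qed.
Lemma ext_m u m w : ext u m w m = w.
Proof. unfold ext; rewrite Nat.eqb_refl; auto. Qed.

(** ** Positive-definite Hermitian forms and Gram-Schmidt *)

(* A second inner product on H, compatible with its vector operations.  Both
   the inner product of H and the form <S x, y> of the frame operator S are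
   instances. *)
Record pd_form := PdForm {
  pf :> H -> H -> C;
  pf_addl : forall x y z : H, pf (vadd x y) z = Cadd (pf x z) (pf y z);
  pf_scall : forall a (x z : H), pf (vscal a x) z = Cmul a (pf x z);
  pf_sym : forall x y : H, pf y x = Cconj (pf x y);
  pf_pos : forall v : H, v <> vzero -> 0 < re (pf v v) }.

Definition ipF : pd_form := PdForm ip ipDl ipZl ip_sym nsq_pos.

Definition independent k (e : nat -> H) : Prop :=
  forall j, (j < k)%nat -> ~ in_span j e (e j).

Section Form.
Variable q : pd_form.

Lemma q0l z : q vzero z = C0.
Proof. apply (additive_zero (fun x => q x z)); intros; apply pf_addl. Qed.
Lemma q0r z : q z vzero = C0.
Proof. rewrite pf_sym, q0l. apply Cconj_0. Qed.
Lemma qDr x y z : q z (vadd x y) = Cadd (q z x) (q z y).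
Proof. rewrite pf_sym, pf_addl, Cconj_add, <- !pf_sym; auto. Qed.
Lemma qZr a x z : q z (vscal a x) = Cmul (Cconj a) (q z x).
Proof. rewrite pf_sym, pf_scall, Cconj_mul, <- pf_sym; auto. Qed.
Lemma qBl x y z : q (vsub x y) z = Csub (q x z) (q y z).
Proof.
  replace (vsub x y) with (vadd x (vscal (Copp C1) y)) by vext.
  rewrite pf_addl, pf_scall. ring.
Qed.
Lemma qvsum_l k F z : q (vsum k F) z = Csum k (fun i => q (F i) z).
Proof. induction k; simpl. apply q0l. rewrite pf_addl, IHk; auto. Qed.
Lemma qvsum_r k F z : q z (vsum k F) = Csum k (fun i => q z (F i)).
Proof. induction k; simpl. apply q0r. rewrite qDr, IHk; auto. Qed.
Lemma qxx_RC x : q x x = RC (re (q x x)).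
Proof. assert (E := f_equal im (pf_sym q x x)). simpl in E. apply C_ext; simpl; lra. Qed.
Lemma q_def v : q v v = C0 -> v = vzero.
Proof.
  intros E. apply NNPP; intro hv. apply (pf_pos q) in hv. rewrite E in hv. simpl in hv. lra.
Qed.

Definition orthonormal m (u : nat -> H) : Prop :=
  forall i j, (i < m)%nat -> (j < m)%nat -> q (u i) (u j) = if Nat.eqb i j then C1 else C0.

Lemma ortho_coef m u c j : orthonormal m u -> (j < m)%nat ->
  q (vsum m (fun i => vscal (c i) (u i))) (u j) = c j.
Proof.
  intros ho hj. rewrite qvsum_l.
  rewrite (Csum_delta m j) by (auto; intros i hi ne; rewrite pf_scall, ho by auto;
      rewrite (proj2 (Nat.eqb_neq i j) ne); ring).
  rewrite pf_scall, ho, Nat.eqb_refl by auto. ring.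
Qed.

Lemma orthonormal_independent m u : orthonormal m u -> independent m u.
Proof.
  intros hu j hj [c E]. assert (h1 := hu j j hj hj). rewrite Nat.eqb_refl in h1.
  assert (h0 : q (u j) (u j) = C0).
  { rewrite E at 1. rewrite qvsum_l. apply Csum_zero. intros i hi.
    rewrite pf_scall, hu, (proj2 (Nat.eqb_neq i j)) by lia. ring. }
  rewrite h1 in h0. assert (E' := f_equal re h0). simpl in E'. lra.
Qed.

Definition proj m u (x : H) := vsum m (fun i => vscal (q x (u i)) (u i)).

Lemma proj_span m u x : in_span m u (proj m u x).
Proof. exists (fun i => q x (u i)). reflexivity. Qed.

Lemma proj_orth m u x j : orthonormal m u -> (j < m)%nat -> q (vsub x (proj m u x)) (u j) = C0.
Proof. intros. unfold proj. rewrite qBl, ortho_coef; auto. ring. Qed.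

Lemma orth_span m u w y : (forall j, (j < m)%nat -> q w (u j) = C0) -> in_span m u y -> q w y = C0.
Proof.
  intros h [c ->]. rewrite qvsum_r. apply Csum_zero. intros i hi. rewrite qZr, h; auto. ring.
Qed.

Lemma perp_perp_span m u d : orthonormal m u ->
  (forall z, (forall j, (j < m)%nat -> q z (u j) = C0) -> q d z = C0) -> in_span m u d.
Proof.
  intros hu hd. set (d' := vsub d (proj m u d)).
  assert (hd' : forall j, (j < m)%nat -> q d' (u j) = C0) by (intros; apply proj_orth; auto).
  assert (hpd : q (proj m u d) d' = C0).
  { rewrite pf_sym, (orth_span m u d'); auto using proj_span. apply Cconj_0. }
  assert (E : q d' d' = C0).
  { unfold d' at 1. rewrite qBl, hpd, hd; auto. ring. }
  apply q_def, vsub_eq0 in E. rewrite E. apply proj_span.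
Qed.

Lemma normsum m b c : orthonormal m b ->
  q (vsum m (fun i => vscal (c i) (b i))) (vsum m (fun i => vscal (c i) (b i)))
  = Csum m (fun i => Cmul (c i) (Cconj (c i))).
Proof.
  intro hb. rewrite qvsum_r. apply Csum_ext. intros i hi. rewrite qZr, ortho_coef; auto. ring.
Qed.

Lemma pythagoras w y : q w y = C0 -> q (vadd w y) (vadd w y) = Cadd (q w w) (q y y).
Proof.
  intros hwy. assert (hyw : q y w = C0) by (rewrite pf_sym, hwy; apply Cconj_0).
  rewrite pf_addl, !qDr, hwy, hyw. ring.
Qed.

Definition residual m b (x : H) : H := vsub x (proj m b x).
Definition normalized (v : H) : H := vscal (RC (/ sqrt (re (q v v)))) v.

Lemma gram_schmidt_step m b x : orthonormal m b -> residual m b x <> vzero ->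
  orthonormal (S m) (ext b m (normalized (residual m b x))) /\
  in_span (S m) (ext b m (normalized (residual m b x))) x.
Proof.
  intros hb hv. set (v := residual m b x). set (w := normalized v).
  assert (hr := pf_pos q v hv). set (r := re (q v v)) in *.
  assert (hs := sqrt_lt_R0 _ hr). assert (hss := sqrt_sqrt r (Rlt_le _ _ hr)).
  assert (hw : forall j, (j < m)%nat -> q w (b j) = C0).
  { intros j hj. unfold w, normalized. rewrite pf_scall. unfold v, residual.
    rewrite proj_orth; auto. ring. }
  split.
  - intros i j hi hj.
    destruct (Nat.eq_dec i m) as [->|ni]; destruct (Nat.eq_dec j m) as [->|nj].
    + rewrite ext_m, Nat.eqb_refl. unfold w, normalized. rewrite pf_scall, qZr, (qxx_RC v).
      fold r. Creal; [|ring]. field_simplify; [|lra]. rewrite pow2_sqrt by lra. field; lra.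
    + rewrite ext_m, ext_lt, (proj2 (Nat.eqb_neq m j)) by lia. apply hw; lia.
    + rewrite ext_m, ext_lt, (proj2 (Nat.eqb_neq i m)), pf_sym, hw by lia. apply Cconj_0.
    + rewrite !ext_lt by lia. apply hb; lia.
  - assert (E : x = vadd (vscal (RC (sqrt r)) w) (proj m b x)).
    { apply v_ext; intro z. unfold w, normalized. fold r. ipexp.
      replace (Cmul (RC (sqrt r)) (Cmul (RC (/ sqrt r)) (ip v z)))
        with (Cmul (Cmul (RC (sqrt r)) (RC (/ sqrt r))) (ip v z)) by ring.
      replace (Cmul (RC (sqrt r)) (RC (/ sqrt r))) with C1 by (Creal; field; lra).
      unfold v, residual. ipexp. ring. }
    rewrite E. apply in_span_add.
    + apply in_span_scal. rewrite <- (ext_m b m w) at 2. apply in_span_elem; lia.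
    + apply in_span_S. eapply in_span_ext; [| apply proj_span].
      intros; rewrite ext_lt; auto.
Qed.

Lemma gram_schmidt k e : exists m b, orthonormal m b /\
  (forall i, (i < k)%nat -> in_span m b (e i)) /\
  (forall i, (i < m)%nat -> in_span k e (b i)) /\
  (independent k e -> m = k).
Proof.
  induction k as [|k IH].
  { exists O, (fun _ => vzero). repeat split; intros; try lia. intros i j hi; lia. }
  destruct IH as (m & b & hb & hs & hsb & hind).
  assert (hproj : in_span k e (proj m b (e k))) by (apply in_span_vsum; auto).
  assert (hind' : independent (S k) e -> independent k e) by (intros h j hj; apply h; lia).
  destruct (classic (residual m b (e k) = vzero)) as [r0|rn].
  -
    apply vsub_eq0 in r0.
    exists m, b. split; [|split; [|split]]; auto.
    + intros i hi. destruct (Nat.eq_dec i k) as [->|ne]; [rewrite r0; apply proj_span|].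
      apply hs; lia.
    + intros i hi. apply in_span_S; auto.
    + intros hI. exfalso. apply (hI k (Nat.lt_succ_diag_r k)). rewrite r0. exact hproj.
  - destruct (gram_schmidt_step m b (e k) hb rn) as [hb' hk].
    set (w := normalized (residual m b (e k))) in *.
    exists (S m), (ext b m w). split; [exact hb'|split; [|split]].
    + intros i hi. destruct (Nat.eq_dec i k) as [->|ne]; auto.
      apply in_span_S. eapply in_span_ext; [| apply hs; lia]. intros; rewrite ext_lt; auto.
    + intros i hi. destruct (Nat.eq_dec i m) as [->|ne].
      * rewrite ext_m. apply in_span_scal, in_span_sub; [apply in_span_elem; lia|].
        apply in_span_S; auto.
      * rewrite ext_lt by lia. apply in_span_S, hsb; lia.
    + intros hI. rewrite hind; auto.
Qed.

End Form.

Lemma ipF_ip (x y : H) : ipF x y = ip x y.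
Proof. reflexivity. Qed.

Lemma span_finite_dim_subspace m (u : nat -> H) : finite_dim_subspace (in_span m u).
Proof.
  split; [split; [apply in_span_zero | split; [apply in_span_add | apply in_span_scal]]|].
  exists m, u. tauto.
Qed.

Definition perp m (u : nat -> H) (x : H) : Prop := forall j, (j < m)%nat -> ip x (u j) = C0.

Lemma perp_subspace m u : is_subspace (perp m u).
Proof.
  split; [|split].
  - intros j hj; apply ip0l.
  - intros x y hx hy j hj. rewrite ipDl, hx, hy; auto. ring.
  - intros a x hx j hj. rewrite ipZl, hx; auto. ring.
Qed.

Lemma perp_closed m u : is_closed_set (perp m u).
Proof.
  intros s l hs hl j hj. destruct (ip_cont s l (u j) hl) as [c1 c2].
  apply C_ext; simpl; eapply UL_sequence; [exact c1| | exact c2|];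
    eapply cv_ext; try apply cv_const; intro n; simpl; rewrite hs; auto.
Qed.

Lemma perp_decomposition m u : orthonormal ipF m u ->
  forall x, exists y v, perp m u y /\ in_span m u v /\ x = vadd y v.
Proof.
  intros hu x. exists (vsub x (proj ipF m u x)), (proj ipF m u x). split; [|split].
  - intros j hj. exact (proj_orth ipF m u x j hu hj).
  - apply proj_span.
  - vext.
Qed.

(** * Parseval frames: polarization *)

Lemma parseval_polar (h : nat -> H) : parseval_frame h -> forall x z,
  Cinfinite_sum (fun n => Cmul (ip x (h n)) (Cconj (ip z (h n)))) (ip x z).
Proof.
  intros hp x z. split.
  - assert (V : re (ip x z) = ((vnorm (vadd x z))^2 - (vnorm (vsub x z))^2) / 4).
    { rewrite !vnorm_sq. unfold nsq. ipexp. rewrite (ip_sym x z).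
      unfold Cadd, Csub, Copp, Cconj; simpl. field. }
    rewrite V. eapply inf_ext; [| apply (inf_polar _ _ _ _ (hp (vadd x z)) (hp (vsub x z)))].
    intro n. cbv beta. rewrite ipDl, ipBl. unfold Cmod2, Cadd, Csub, Copp, Cmul, Cconj; simpl. field.
  - assert (V : im (ip x z) =
              ((vnorm (vadd x (vscal Ci z)))^2 - (vnorm (vsub x (vscal Ci z)))^2) / 4).
    { rewrite !vnorm_sq. unfold nsq. ipexp. rewrite (ip_sym x z).
      unfold Cadd, Csub, Copp, Cconj, Cmul, Ci; simpl. field. }
    rewrite V. eapply inf_ext;
      [| apply (inf_polar _ _ _ _ (hp (vadd x (vscal Ci z))) (hp (vsub x (vscal Ci z))))].
    intro n. cbv beta. rewrite ipDl, ipBl, ipZl.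
    unfold Cmod2, Cadd, Csub, Copp, Cmul, Cconj, Ci; simpl. field.
Qed.

(** * The frame operator *)

Definition frame_psum (f : nat -> H) (x : H) N := vsum N (fun n => vscal (ip x (f n)) (f n)).

Lemma psum_limit_UstarU (f : nat -> H) (x l : H) : seq_conv (frame_psum f x) l -> UstarU f x l.
Proof.
  intros hl z. unfold l2_ip, analysis_op. apply Cinf_iff.
  destruct (ip_cont _ _ z hl) as [h1 h2].
  assert (E : forall n, ip (frame_psum f x n) z
                      = Csum n (fun k => Cmul (ip x (f k)) (Cconj (ip z (f k))))).
  { intro n. unfold frame_psum. rewrite ip_vsum_l. apply Csum_ext'. intro i.
    rewrite ipZl, <- ip_sym; auto. }
  split; intros eps he; [destruct (h1 eps he) as [N HN] | destruct (h2 eps he) as [N HN]];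
   exists N; intros n hn; rewrite <- E; apply HN; lia.
Qed.

Lemma UstarU_unique (f : nat -> H) (x y1 y2 : H) : UstarU f x y1 -> UstarU f x y2 -> y1 = y2.
Proof. intros h1 h2. apply v_ext; intro z. eapply Cinf_unique; [apply h1|apply h2]. Qed.

Section Bessel.
Variables (f : nat -> H) (B : R).
Hypothesis hB : 0 < B.
Hypothesis hbessel : forall x, exists s,
  infinite_sum (fun n => Cmod2 (ip x (f n))) s /\ s <= B * nsq x.

Lemma bessel_block x N K :
  nsq (vsum K (fun j => vscal (ip x (f (N + j)%nat)) (f (N + j)%nat)))
  <= B * rsum K (fun j => Cmod2 (ip x (f (N + j)%nat))).
Proof.
  set (W := vsum K _).
  assert (E : nsq W = rsum K (fun j => re (Cmul (ip x (f (N + j)%nat)) (Cconj (ip W (f (N + j)%nat)))))).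
  { unfold nsq. rewrite <- re_Csum. f_equal. unfold W at 1. rewrite ip_vsum_l.
    apply Csum_ext'. intro i. rewrite ipZl, <- ip_sym. reflexivity. }
  assert (B1 : rsum K (fun j => Cmod2 (ip W (f (N + j)%nat))) <= B * nsq W).
  { destruct (hbessel W) as (s & hs & hb).
    assert (h1 := rsum_le_lim _ _ (fun i => Cmod2_ge0 _) hs (N + K)).
    rewrite rsum_shift in h1.
    assert (0 <= rsum N (fun i => Cmod2 (ip W (f i)))) by (apply rsum_ge0; intro; apply Cmod2_ge0).
    lra. }
  assert (B2 : 2 * B * nsq W <= B * B * rsum K (fun j => Cmod2 (ip x (f (N + j)%nat)))
                  + rsum K (fun j => Cmod2 (ip W (f (N + j)%nat)))).
  { rewrite E, <- rsum_scal, <- rsum_scal, <- rsum_add. apply rsum_le. intro i.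
    apply re_conj_bound. }
  assert (hw := nsq_ge0 W). apply Rmult_le_reg_l with B; auto. nra.
Qed.

Lemma frame_psum_cauchy x : Cauchy_seq (frame_psum f x).
Proof.
  destruct (hbessel x) as (s & hs & _).
  set (g := fun i => Cmod2 (ip x (f i))).
  intros eps he.
  destruct (CV_Cauchy _ (exist _ s hs) (eps * eps / B)) as [N HN].
  { apply Rdiv_lt_0_compat; nra. }
  assert (key : forall n k, (n >= S N)%nat ->
            nsq (vsub (frame_psum f x (n + k)) (frame_psum f x n)) < eps * eps).
  { intros n k hn. unfold frame_psum. rewrite vsum_shift.
    eapply Rle_lt_trans; [apply bessel_block|].
    assert (Eg : rsum k (fun j => g (n + j)%nat) = rsum (n + k) g - rsum n g)
      by (rewrite rsum_shift; ring).
    unfold g in Eg; rewrite Eg; fold g.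
    destruct n as [|n']; [lia|]. replace (S n' + k)%nat with (S (n' + k)) by lia.
    rewrite !rsum_sf.
    assert (HN' := HN (n' + k)%nat n' ltac:(lia) ltac:(lia)). unfold Rdist in HN'.
    assert (hle := Rle_abs (sum_f_R0 g (n' + k) - sum_f_R0 g n')).
    apply Rlt_le_trans with (B * (eps * eps / B)).
    - apply Rmult_lt_compat_l; [lra|]. fold g in HN'. lra.
    - right; field; lra. }
  exists (S N). intros n m hn hm. apply vnorm_lt; auto.
  destruct (Nat.le_gt_cases n m).
  - rewrite nsq_sym. replace m with (n + (m - n))%nat by lia. apply key; lia.
  - replace n with (m + (n - m))%nat by lia. apply key; lia.
Qed.

End Bessel.

Section FrameOperator.
Variable f : nat -> H.
Hypothesis Hf : frame f.

Lemma frame_bounds : exists A B, 0 < A /\ 0 < B /\ forall x, exists s,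
  infinite_sum (fun n => Cmod2 (ip x (f n))) s /\ A * nsq x <= s /\ s <= B * nsq x.
Proof.
  destruct Hf as (A & B & hA & hAB & h). exists A, B. split; [|split]; [lra|lra|].
  intro x. destruct (h x) as (s & hs & h1 & h2). rewrite vnorm_sq in h1, h2. eauto.
Qed.

Lemma frame_op_exists x : exists y, seq_conv (frame_psum f x) y /\ UstarU f x y.
Proof.
  destruct frame_bounds as (A & B & _ & hB & hb).
  assert (hbessel : forall x, exists s,
    infinite_sum (fun n => Cmod2 (ip x (f n))) s /\ s <= B * nsq x).
  { intro z. destruct (hb z) as (s & ? & ? & ?); eauto. }
  destruct (complete _ (frame_psum_cauchy f B hB hbessel x)) as [l hl].
  exists l; split; auto. apply psum_limit_UstarU; auto.
Qed.

Definition Sf (x : H) : H := proj1_sig (constructive_indefinite_description _ (frame_op_exists x)).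

Lemma Sf_spec x : seq_conv (frame_psum f x) (Sf x) /\ UstarU f x (Sf x).
Proof. unfold Sf. destruct constructive_indefinite_description; simpl; auto. Qed.
Lemma Sf_U x : UstarU f x (Sf x).
Proof. apply Sf_spec. Qed.
Lemma Sf_eq x y : UstarU f x y -> Sf x = y.
Proof. intro h; eapply UstarU_unique; [apply Sf_U | exact h]. Qed.

Lemma Sf_add x y : Sf (vadd x y) = vadd (Sf x) (Sf y).
Proof.
  apply Sf_eq. intro z. unfold l2_ip, analysis_op. rewrite ipDl.
  eapply Cinf_ext; [| apply (Cinf_add _ _ _ _ (Sf_U x z) (Sf_U y z))].
  intro n; unfold analysis_op; rewrite ipDl; ring.
Qed.
Lemma Sf_scal a x : Sf (vscal a x) = vscal a (Sf x).
Proof.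
  apply Sf_eq. intro z. unfold l2_ip, analysis_op. rewrite ipZl.
  eapply Cinf_ext; [| apply (Cinf_scal a _ _ (Sf_U x z))].
  intro n; unfold analysis_op; rewrite ipZl; ring.
Qed.
Lemma Sf_vsum k (c : nat -> C) (u : nat -> H) :
  Sf (vsum k (fun i => vscal (c i) (u i))) = vsum k (fun i => vscal (c i) (Sf (u i))).
Proof.
  induction k; simpl.
  - replace (@vzero H) with (vscal C0 (@vzero H)) at 1 by vext. rewrite Sf_scal. vext.
  - rewrite Sf_add, Sf_scal, IHk; auto.
Qed.

Lemma Sf_adj x z : ip (Sf x) z = ip x (Sf z).
Proof.
  assert (h1 := Sf_U x z). assert (h2 := Cinf_conj _ _ (Sf_U z x)).
  unfold l2_ip, analysis_op in *.
  assert (h3 : Cinfinite_sum (fun n => Cmul (ip x (f n)) (Cconj (ip z (f n))))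
                             (Cconj (ip (Sf z) x))).
  { eapply Cinf_ext; [| exact h2]. intro n; cbv beta; rewrite Cconj_mul, Cconj_conj; ring. }
  rewrite (Cinf_unique _ _ _ h1 h3), <- ip_sym. auto.
Qed.

Lemma Sf_quad x : infinite_sum (fun n => Cmod2 (ip x (f n))) (re (ip (Sf x) x)).
Proof. apply Cinf_mod2, (Sf_U x x). Qed.

Lemma Sf_pos v : v <> vzero -> 0 < re (ip (Sf v) v).
Proof.
  intro hv. destruct frame_bounds as (A & B & hA & _ & h). destruct (h v) as (s & hs & h1 & _).
  rewrite (inf_unique _ _ _ (Sf_quad v) hs). assert (hn := nsq_pos v hv). nra.
Qed.

Definition frameF : pd_form.
Proof.
  refine (PdForm (fun x y => ip (Sf x) y) _ _ _ Sf_pos).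
  - intros x y z. rewrite Sf_add, ipDl; auto.
  - intros a x z. rewrite Sf_scal, ipZl; auto.
  - intros x y. rewrite Sf_adj, <- ip_sym. auto.
Defined.

Lemma reconstructs_iff_fixed x : reconstructs f x <-> Sf x = x.
Proof.
  unfold reconstructs. rewrite (seq_conv_shift (frame_psum f x)). split.
  - intros h. apply Sf_eq, psum_limit_UstarU, h.
  - intros E. rewrite <- E at 2. apply Sf_spec.
Qed.

Lemma finite_defect_iff : finite_dim_set (im_I_minus_UstarU f) <->
  exists k e, forall x, in_span k e (vsub x (Sf x)).
Proof.
  split; intros (k & e & he); exists k, e.
  - intros x. apply he. exists x, (Sf x). split; auto. apply Sf_U.
  - intros w (x & y & hxy & ->). apply Sf_eq in hxy. subst y. apply he.
Qed.

Lemma Sf_preserves_span m u : (forall x, in_span m u (vsub x (Sf x))) ->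
  forall x, in_span m u x -> in_span m u (Sf x).
Proof.
  intros hd x hx. replace (Sf x) with (vsub x (vsub x (Sf x))) by vext.
  apply in_span_sub; auto.
Qed.

Lemma fixed_on_perp m u : (forall x, in_span m u (vsub x (Sf x))) ->
  forall x, perp m u x -> Sf x = x.
Proof.
  intros hd x hx. apply v_ext; intro z. rewrite Sf_adj.
  assert (E : ip x (vsub z (Sf z)) = C0) by exact (orth_span ipF m u x _ hx (hd z)).
  rewrite ipBr in E.
  apply C_ext; [apply (f_equal re) in E | apply (f_equal im) in E]; simpl in E; lra.
Qed.

Lemma defect_from_complement (M : H -> Prop) m u k e :
  (forall x, M x -> in_span m u (vsub x (Sf x))) ->
  (forall x, exists y v, M y /\ in_span k e v /\ x = vadd y v) ->
  forall x, in_span (m + k) (concat m u (fun i => vsub (e i) (Sf (e i)))) (vsub x (Sf x)).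
Proof.
  intros hM hdec x. destruct (hdec x) as (y & v & hy & [c ->] & ->).
  rewrite Sf_add, Sf_vsum.
  replace (vsub (vadd y (vsum k (fun i => vscal (c i) (e i))))
               (vadd (Sf y) (vsum k (fun i => vscal (c i) (Sf (e i))))))
    with (vadd (vsub y (Sf y)) (vsum k (fun i => vscal (c i) (vsub (e i) (Sf (e i))))))
    by (rewrite vsum_sub; vext).
  apply in_span_concat; auto. eexists; reflexivity.
Qed.

(* If f_n + g_n is a Parseval frame with all g_n in span u, then
   <S x, z> = <x, z> on u^perp, so (I - S) maps u^perp into span u. *)
Lemma perturbed_parseval_defect m u g : orthonormal ipF m u ->
  (forall n, in_span m u (g n)) -> parseval_frame (fun n => vadd (f n) (g n)) ->
  forall x, perp m u x -> in_span m u (vsub x (Sf x)).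
Proof.
  intros hu hg hp x hx. apply (perp_perp_span ipF); auto.
  intros z hz. rewrite ipF_ip, ipBl.
  assert (hfg : forall v n, perp m u v -> ip v (vadd (f n) (g n)) = ip v (f n)).
  { intros v n hv. rewrite ipDr, <- (ipF_ip v (g n)), (orth_span ipF m u v (g n)); auto. ring. }
  assert (E : ip x z = ip (Sf x) z).
  { eapply Cinf_unique; [apply (parseval_polar _ hp x z)|].
    eapply Cinf_ext; [| apply (Sf_U x z)]. intro n. cbv beta. unfold analysis_op.
    rewrite !hfg; auto. }
  rewrite E. ring.
Qed.

(* Gram-Schmidt for the inner product gives an orthonormal family u whose
   span contains Im(I - S). *)
Lemma defect_orthonormal_basis : finite_dim_set (im_I_minus_UstarU f) ->
  exists m u, orthonormal ipF m u /\ forall x, in_span m u (vsub x (Sf x)).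
Proof.
  intros h. apply finite_defect_iff in h as (k & e & he).
  destruct (gram_schmidt ipF k e) as (m & u & hu & hs & _ & _).
  exists m, u. split; auto. intro x. apply (span_trans k e); auto.
Qed.

Section ParsevalPerturbation.
Variables (m : nat) (u b : nat -> H).
Hypothesis hu : orthonormal ipF m u.
Hypothesis hdef : forall x, in_span m u (vsub x (Sf x)).
Hypothesis hb : orthonormal frameF m b.
Hypothesis hbu : forall i, (i < m)%nat -> in_span m u (b i).

(* T x = (x - P x) + sum_i <x,u_i> b_i moves the u-coordinates of x onto
   the S-orthonormal family b; it turns |x|^2 into <S T x, T x>. *)
Definition transfer (x : H) : H :=
  vadd (vsub x (proj ipF m u x)) (vsum m (fun i => vscal (ip x (u i)) (b i))).

Definition perturbation (n : nat) : H :=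
  vsum m (fun i => vscal (Csub (ip (f n) (b i)) (ip (f n) (u i))) (u i)).

Lemma perturbation_coeff x n : ip x (vadd (f n) (perturbation n)) = ip (transfer x) (f n).
Proof.
  unfold perturbation, transfer, proj. cbn [pf ipF]. rewrite ipDr, ip_vsum_scal_r.
  rewrite (Csum_ext' m (fun i => Cmul (Cconj (Csub (ip (f n) (b i)) (ip (f n) (u i)))) (ip x (u i)))
             (fun i => Csub (Cmul (ip x (u i)) (ip (b i) (f n)))
                            (Cmul (ip x (u i)) (ip (u i) (f n))))).
  2:{ intro i. rewrite Cconj_sub, <- !ip_sym. ring. }
  rewrite Csum_sub. ipexp. ring.
Qed.

Lemma transfer_isometry x : ip (Sf (transfer x)) (transfer x) = ip x x.
Proof.
  set (y := vsub x (proj ipF m u x)).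
  set (W := vsum m (fun i => vscal (ip x (u i)) (b i))).
  assert (hy : perp m u y) by (intros j hj; exact (proj_orth ipF m u x j hu hj)).
  assert (hW : in_span m u W) by (apply in_span_vsum; auto).
  assert (hSW : in_span m u (Sf W)) by (apply (Sf_preserves_span m u); auto).
  assert (e1 : ip y W = C0) by exact (orth_span ipF m u y W hy hW).
  assert (e2 : ip (Sf W) y = C0).
  { rewrite ip_sym, <- (ipF_ip y), (orth_span ipF m u y _ hy hSW). apply Cconj_0. }
  assert (e3 : ip (Sf W) W = Csum m (fun i => Cmul (ip x (u i)) (Cconj (ip x (u i)))))
    by exact (normsum frameF m b _ hb).
  assert (e4 : ip (proj ipF m u x) (proj ipF m u x)
               = Csum m (fun i => Cmul (ip x (u i)) (Cconj (ip x (u i)))))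
    by exact (normsum ipF m u _ hu).
  assert (e5 : ipF y (proj ipF m u x) = C0) by exact (orth_span ipF m u y _ hy (proj_span ipF m u x)).
  assert (Dx : x = vadd y (proj ipF m u x)) by (unfold y; vext).
  assert (Ex : ip x x = Cadd (ip y y) (ip (proj ipF m u x) (proj ipF m u x))).
  { rewrite Dx at 1 2. exact (pythagoras ipF _ _ e5). }
  unfold transfer. fold y W. rewrite Sf_add, (fixed_on_perp m u hdef y hy).
  rewrite ipDl, !ipDr, e1, e2, e3, Ex, e4. ring.
Qed.

(* sum_n |<x, f_n + g_n>|^2 = <S T x, T x> = |x|^2 *)
Lemma perturbation_parseval : parseval_frame (fun n => vadd (f n) (perturbation n)).
Proof.
  intro x. rewrite vnorm_sq. unfold nsq. rewrite <- (transfer_isometry x).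
  eapply inf_ext; [| apply (Sf_quad (transfer x))].
  intro n. cbv beta. rewrite perturbation_coeff. reflexivity.
Qed.

End ParsevalPerturbation.

(* Gram-Schmidt for <S.,.> applied to u provides the family b above. *)
Lemma finite_defect_parseval m u : orthonormal ipF m u ->
  (forall x, in_span m u (vsub x (Sf x))) ->
  exists g, (forall n, in_span m u (g n)) /\ parseval_frame (fun n => vadd (f n) (g n)).
Proof.
  intros hu hdef.
  destruct (gram_schmidt frameF m u) as (m' & b & hb & _ & hbu & hind).
  rewrite hind in hb, hbu by (apply (orthonormal_independent ipF); auto).
  exists (perturbation m u b). split.
  - intro n. eexists; reflexivity.
  - apply perturbation_parseval; auto.
Qed.

Lemma frame_a_to_b : finite_dim_set (im_I_minus_UstarU f) ->
  exists L : H -> Prop, finite_dim_subspace L /\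
    exists g : nat -> H, (forall n, L (g n)) /\ parseval_frame (fun n => vadd (f n) (g n)).
Proof.
  intros h. destruct (defect_orthonormal_basis h) as (m & u & hu & hdef).
  exists (in_span m u). split; [apply span_finite_dim_subspace|].
  apply finite_defect_parseval; auto.
Qed.

Lemma frame_b_to_a : (exists L : H -> Prop, finite_dim_subspace L /\
    exists g : nat -> H, (forall n, L (g n)) /\ parseval_frame (fun n => vadd (f n) (g n))) ->
  finite_dim_set (im_I_minus_UstarU f).
Proof.
  intros (L & (_ & k & e & hL) & g & hg & hp).
  destruct (gram_schmidt ipF k e) as (m & u & hu & hs & _ & _).
  assert (hgu : forall n, in_span m u (g n)).
  { intro n. apply (span_trans k e); [auto | apply hL; auto]. }
  apply finite_defect_iff. exists (m + m)%nat, (concat m u (fun i => vsub (u i) (Sf (u i)))).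
  apply (defect_from_complement (perp m u)).
  - apply (perturbed_parseval_defect m u g); auto.
  - apply perp_decomposition; auto.
Qed.

Lemma frame_a_to_c : finite_dim_set (im_I_minus_UstarU f) ->
  exists M : H -> Prop, is_subspace M /\ is_closed_set M /\ finite_codim M /\
    forall x, M x -> reconstructs f x.
Proof.
  intros h. destruct (defect_orthonormal_basis h) as (m & u & hu & hdef).
  exists (perp m u). split; [apply perp_subspace | split; [apply perp_closed | split]].
  - exists m, u. apply perp_decomposition; auto.
  - intros x hx. apply reconstructs_iff_fixed, (fixed_on_perp m u); auto.
Qed.

Lemma frame_c_to_a : (exists M : H -> Prop, is_subspace M /\ is_closed_set M /\
    finite_codim M /\ forall x, M x -> reconstructs f x) ->
  finite_dim_set (im_I_minus_UstarU f).
Proof.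
  intros (M & _ & _ & (k & e & hcod) & hrec).
  apply finite_defect_iff. exists (0 + k)%nat, (concat 0 e (fun i => vsub (e i) (Sf (e i)))).
  apply (defect_from_complement M 0 e); auto.
  intros x hx. apply hrec, reconstructs_iff_fixed in hx. rewrite hx.
  replace (vsub x x) with (@vzero H) by vext. apply in_span_zero.
Qed.

End FrameOperator.
End Hilbert.

Theorem theorem2p13 (H : HilbertSpace) (HH : is_hilbert H) (Hsep : separable H)
  (Hinf : infinite_dimensional H) (f : nat -> H) (Hf : frame f) :
  (finite_dim_set (im_I_minus_UstarU f) <->
   exists L : H -> Prop, finite_dim_subspace L /\
     exists g : nat -> H, (forall n, L (g n)) /\
       parseval_frame (fun n => vadd (f n) (g n))) /\
  ((exists L : H -> Prop, finite_dim_subspace L /\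
     exists g : nat -> H, (forall n, L (g n)) /\
       parseval_frame (fun n => vadd (f n) (g n))) <->
   exists M : H -> Prop, is_subspace M /\ is_closed_set M /\ finite_codim M /\
     forall x, M x -> reconstructs f x).
Proof.
  split; split; intro h.
  - exact (frame_a_to_b H HH f Hf h).
  - exact (frame_b_to_a H HH f Hf h).
  - exact (frame_a_to_c H HH f Hf (frame_b_to_a H HH f Hf h)).
  - exact (frame_a_to_b H HH f Hf (frame_c_to_a H HH f Hf h)).
Qed.
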